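(* Suppose that $A\neq B$ are strictly tree coloring equivalent $m\times m$ coloring matrices. Then there is a finite sequence $A=C_0,C_1,\dots,C_r=B$ with $r\ge1$ such that each $C_{s}$ is obtained from $C_{s-1}$ by one application of the following operation: given a coloring matrix $C=(c_{pq})$, disjoint sets $I,J\subseteq\{1,\dots,m\}$ with $|I|=|J|$ such that $\sum_{i\in I}t_C^{(i)}(n)=\sum_{j\in J}t_C^{(j)}(n)$ for all $n$, and a color $\ell$ with $c_{\ell i}=0$ for all $i\in I$ and $c_{\ell j}=1$ for all $j\in J$, replace $C$ by the matrix $C'$ that agrees with $C$ except that $c'_{\ell i}=1$ for $i\in I$ and $c'_{\ell j}=0$ for $j\in J$.
   Context: A plane tree is an unlabeled rooted tree in which the children of every vertex are linearly ordered. A coloring matrix is an $m\times m$ matrix $A=(a_{ij})$ with entries in $\{0,1\}$. An $A$-coloring of a plane tree assigns to each vertex a color in $\{1,\dots,m\}$ such that whenever a vertex of color $j$ is a child of a vertex of color $i$, $a_{ij}=1$. Let $t_A^{(i)}(n)$ be the number of pairs (plane tree with $n$ vertices, $A$-coloring of it) in which the root has color $i$. Two $m\times m$ coloring matrices $A,B$ are strictly tree coloring equivalent if $t_A^{(i)}(n)=t_B^{(i)}(n)$ for all $n\ge1$ and all $1\le i\le m$. *)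

From mathcomp Require Import all_boot all_algebra.
Set Implicit Arguments. Unset Strict Implicit. Unset Printing Implicit Defensive.

(* Colors are 'I_m (color k+1 of the paper is the ordinal k).
   A coloring matrix is an m x m matrix with 0/1 entries, encoded as bool. *)
Definition colmx (m : nat) := 'M[bool]_m.

(* A plane tree together with a coloring of its vertices by 'I_m: each vertex
   carries a color and an ordered list of children.  Pairs (plane tree,
   coloring) are in bijection with such colored plane trees. *)
Inductive ctree (m : nat) : Type := CNode : 'I_m -> seq (ctree m) -> ctree m.

Inductive ptree : Type := PNode : seq ptree -> ptree.
Fixpoint shape (m : nat) (t : ctree m) : ptree :=
  let: CNode _ ts := t in PNode (map (@shape m) ts).

Definition croot (m : nat) (t : ctree m) : 'I_m := let: CNode c _ := t in c.

Fixpoint csize (m : nat) (t : ctree m) : nat :=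
  let: CNode _ ts := t in (sumn (map (@csize m) ts)).+1.

Fixpoint valid (m : nat) (A : colmx m) (t : ctree m) : bool :=
  let: CNode c ts := t in all (fun u => A c (croot u) && valid A u) ts.

Fixpoint enum_trees (m : nat) (k n : nat) {struct k} : seq (ctree m) :=
  match k with
  | 0 => [::]
  | k'.+1 =>
    match n with
    | 0 => [::]
    | n'.+1 => [seq CNode c f | c <- enum 'I_m, f <- enum_forests m k' n']
    end
  end
with enum_forests (m : nat) (k n : nat) {struct k} : seq (seq (ctree m)) :=
  match k with
  | 0 => if n == 0 then [:: [::]] else [::]
  | k'.+1 =>
    match n with
    | 0 => [:: [::]]
    | _ => flatten [seq [seq t :: f | t <- enum_trees m k' j,
                                     f <- enum_forests m k' (n - j)]
                   | j <- iota 1 n]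
    end
  end.

(* all colored plane trees with n vertices (fuel 2n+1 is sufficient) *)
Definition ctrees (m n : nat) : seq (ctree m) := enum_trees m (n.*2.+1) n.

(* t_A^{(i)}(n): number of pairs (plane tree with n vertices, A-coloring)
   whose root has color i. *)
Definition tcount (m : nat) (A : colmx m) (i : 'I_m) (n : nat) : nat :=
  count (fun t => (croot t == i) && valid A t) (ctrees m n).

Definition strictly_tree_coloring_equivalent (m : nat) (A B : colmx m) : Prop :=
  forall n, 0 < n -> forall i : 'I_m, tcount A i n = tcount B i n.

Definition switch_step (m : nat) (C C' : colmx m) : Prop :=
  exists (I J : {set 'I_m}) (l : 'I_m),
    [/\ [disjoint I & J] /\ #|I| = #|J|,
        (forall n, 0 < n ->
           \sum_(i in I) tcount C i n = \sum_(j in J) tcount C j n),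
        (forall i, i \in I -> C l i = false),
        (forall j, j \in J -> C l j = true) &
        C' = (\matrix_(p, q) (if p == l then
                               (if q \in I then true
                                else if q \in J then false else C p q)
                             else C p q))%R].

(* Cut a colored tree at its root: a tree of size n+1 with root color i is a
   forest of size n whose trees hang validly below i.  Hence the forest counts
   F_i are the INVERT transform of g_i(j) = sum_c a_ic t^(c)(j), so the
   sequences t^(c) determine every g_i, and conversely any matrix whose rows
   have the same sums g_i against t_A has the same tree counts as A.
   Replacing the rows of A one at a time by those of B thus keeps every
   intermediate matrix equivalent to A, and replacing row l is exactly one
   switch with I = {q | a_lq < b_lq} and J = {q | a_lq > b_lq}. *)
From mathcomp Require Import all_boot all_algebra zify.
Set Implicit Arguments. Unset Strict Implicit. Unset Printing Implicit Defensive.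

Lemma count_allpairs (S T U : Type) (g : S -> T -> U) (a : pred U)
    (p : pred S) (q : pred T) s t :
  (forall x y, a (g x y) = p x && q y) ->
  count a [seq g x y | x <- s, y <- t] = count p s * count q t.
Proof.
move=> aE; elim: s => [|x s IHs] //=.
rewrite count_cat IHs count_map mulnDl; congr (_ + _).
by case: (p x) (eq_count (a2 := fun y => p x && q y) (aE x)) => -> /=;
  rewrite ?mul1n ?count_pred0.
Qed.

Lemma eq_from_stable (T : Type) (f : nat -> T) a :
  (forall k, a <= k -> f k = f k.+1) -> forall k, a <= k -> f k = f a.
Proof.
move=> f_stable; elim=> [|k IHk]; first by rewrite leqn0 => /eqP->.
rewrite leq_eqVlt => /orP[/eqP<- // | a_le_k].
by rewrite -f_stable // IHk.
Qed.

Section Enumeration.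
Variable m : nat.

Lemma enum_trees_SS k n :
  enum_trees m k.+1 n.+1 = [seq CNode c f | c <- enum 'I_m, f <- enum_forests m k n].
Proof. by []. Qed.

Lemma enum_forests_SS k n :
  enum_forests m k.+1 n.+1 =
  flatten [seq [seq t :: f | t <- enum_trees m k j, f <- enum_forests m k (n.+1 - j)]
          | j <- iota 1 n.+1].
Proof. by []. Qed.

Lemma enum_fuel_succ k n :
  (n.*2 <= k.+1 -> enum_trees m k n = enum_trees m k.+1 n) /\
  (n.*2 <= k -> enum_forests m k n = enum_forests m k.+1 n).
Proof.
elim: k n => [|k IHk] [|n]; split=> // n_le; try lia.
  by rewrite !enum_trees_SS (IHk n).2 //; lia.
rewrite !enum_forests_SS; congr flatten; apply/eq_in_map => j.
rewrite mem_iota => /andP[j_gt0 j_le].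
by rewrite (IHk j).1 ?(IHk (n.+1 - j)).2 //; lia.
Qed.

Definition forests n := enum_forests m n.*2 n.

Lemma enum_trees_fuel k n : n.*2 <= k.+1 -> enum_trees m k n = ctrees m n.
Proof.
have stable k' : n.*2.-1 <= k' -> enum_trees m k' n = enum_trees m n.*2.-1 n.
  apply: (eq_from_stable (f := enum_trees m ^~ n)) => k'' le_k''.
  by apply: (enum_fuel_succ k'' n).1; lia.
by move=> n_le; rewrite /ctrees !stable //; lia.
Qed.

Lemma enum_forests_fuel k n : n.*2 <= k -> enum_forests m k n = forests n.
Proof.
move=> n_le; apply: (eq_from_stable (f := enum_forests m ^~ n)) => // k' n_le'.
exact: (enum_fuel_succ k' n).2.
Qed.

Lemma ctrees_S n : ctrees m n.+1 = [seq CNode c f | c <- enum 'I_m, f <- forests n].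
Proof. by rewrite /ctrees doubleS enum_trees_SS enum_forests_fuel //; lia. Qed.

Lemma forests_S n :
  forests n.+1 = flatten [seq [seq t :: f | t <- ctrees m j, f <- forests (n.+1 - j)]
                         | j <- iota 1 n.+1].
Proof.
rewrite /forests doubleS enum_forests_SS; congr flatten.
apply/eq_in_map => j; rewrite mem_iota => /andP[j_gt0 j_le].
by rewrite enum_trees_fuel ?enum_forests_fuel //; lia.
Qed.

End Enumeration.

Section Counting.
Variables (m : nat) (C : colmx m).

Definition valid_children (i : 'I_m) (f : seq (ctree m)) :=
  all (fun u => C i (croot u) && valid C u) f.

Definition fcount i n := count (valid_children i) (forests m n).

Definition child_count i j := count (fun t => C i (croot t) && valid C t) (ctrees m j).

Lemma tcount_S i n : tcount C i n.+1 = fcount i n.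
Proof.
rewrite /tcount ctrees_S (@count_allpairs _ _ _ _ _ (pred1 i) (valid_children i)).
  by rewrite count_uniq_mem ?enum_uniq // mem_enum mul1n.
by move=> c f /=; case: eqP => // ->.
Qed.

Lemma fcount0 i : fcount i 0 = 1.
Proof. by []. Qed.

Lemma tcount1 i : tcount C i 1 = 1.
Proof. by rewrite tcount_S fcount0. Qed.

Lemma fcount_S i n :
  fcount i n.+1 = \sum_(1 <= j < n.+2) child_count i j * fcount i (n.+1 - j).
Proof.
rewrite /fcount forests_S count_flatten sumnE !big_map.
by apply: eq_bigr => j _; apply: count_allpairs.
Qed.

Lemma child_count_sum i j : child_count i j = \sum_c C i c * tcount C c j.
Proof.
rewrite /child_count /tcount; elim: (ctrees m j) => [|t s IHs] /=.
  by rewrite big1 // => c _; rewrite muln0.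
rewrite IHs (eq_bigr _ (fun c _ => mulnDr _ _ _)) big_split /=; congr (_ + _).
rewrite (bigD1 (croot t)) //= eqxx big1 ?addn0 ?mulnb //.
by move=> c /negbTE c_neq; rewrite eq_sym c_neq muln0.
Qed.

End Counting.

Definition invert_transform (h f : nat -> nat) :=
  f 0 = 1 /\ forall n, f n.+1 = \sum_(1 <= j < n.+2) h j * f (n.+1 - j).

Lemma fcount_invert_transform m (C : colmx m) i :
  invert_transform (child_count C i) (fcount C i).
Proof. by split; [exact: fcount0 | exact: fcount_S]. Qed.

Lemma invert_transform_eq_upto h1 f1 h2 f2 N :
  invert_transform h1 f1 -> invert_transform h2 f2 ->
  (forall j, 1 <= j <= N -> h1 j = h2 j) -> forall k, k <= N -> f1 k = f2 k.
Proof.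
move=> [f1_0 f1_S] [f2_0 f2_S] eq_h.
elim/ltn_ind => -[|k] IHk k_le; first by rewrite f1_0 f2_0.
rewrite f1_S f2_S; apply: eq_big_nat => j /andP[j_gt0 j_lt].
by rewrite eq_h ?IHk ?j_gt0 //; lia.
Qed.

Lemma invert_transform_inj h1 f1 h2 f2 :
  invert_transform h1 f1 -> invert_transform h2 f2 ->
  f1 =1 f2 -> forall j, 0 < j -> h1 j = h2 j.
Proof.
move=> [f1_0 f1_S] [f2_0 f2_S] eq_f.
elim/ltn_ind => -[|n] // IHn _.
have := eq_f n.+1; rewrite f1_S f2_S !(big_nat_recr n.+1) //= subnn f1_0 f2_0 !muln1.
rewrite (@eq_big_nat _ _ _ 1 n.+1 _ (fun j => h2 j * f2 (n.+1 - j))) => [/addnI //|j].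
by move=> /andP[j_gt0 j_lt]; rewrite IHn ?eq_f.
Qed.

Section Equivalence.
Variables (m : nat) (A B : colmx m).

Lemma child_count_equiv : strictly_tree_coloring_equivalent A B ->
  forall i j, 0 < j -> child_count A i j = child_count B i j.
Proof.
move=> eqAB i; apply: (invert_transform_inj (fcount_invert_transform A i)
                                            (fcount_invert_transform B i)).
by move=> n; rewrite -!tcount_S eqAB.
Qed.

Lemma tcount_eq_of_row_sums (D : colmx m) :
  (forall i j, 0 < j -> \sum_c D i c * tcount A c j = child_count A i j) ->
  forall n i, tcount D i n = tcount A i n.
Proof.
move=> rowsD; elim/ltn_ind => -[|n] // IHn i.
rewrite !tcount_S; apply: (invert_transform_eq_upto (N := n)
  (fcount_invert_transform D i) (fcount_invert_transform A i)) => // j /andP[j_gt0 j_le].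
by rewrite child_count_sum -rowsD //; apply: eq_bigr => c _; rewrite IHn.
Qed.

Definition row_mix (s : nat) : colmx m :=
  (\matrix_(p, q) if (p < s)%N then B p q else A p q)%R.

Lemma tcount_row_mix s : strictly_tree_coloring_equivalent A B ->
  forall n i, tcount (row_mix s) i n = tcount A i n.
Proof.
move=> eqAB; apply: tcount_eq_of_row_sums => i j j_gt0.
under eq_bigr => c _ do rewrite mxE.
case: ltnP => _; last by rewrite child_count_sum.
under eq_bigr => c _ do rewrite eqAB //.
by rewrite -child_count_sum child_count_equiv.
Qed.

End Equivalence.

Definition set_mxrow m (C : colmx m) (l : 'I_m) (b : 'I_m -> bool) : colmx m :=
  (\matrix_(p, q) if p == l then b q else C p q)%R.

Lemma sum_bool_split m (x y : 'I_m -> bool) (t : 'I_m -> nat) :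
  \sum_c y c * t c = \sum_c (x c && y c) * t c + \sum_(c in [set q | ~~ x q && y q]) t c.
Proof.
rewrite [X in _ + X]big_mkcond -big_split; apply: eq_bigr => c _ /=.
by rewrite inE; case: (x c); case: (y c); rewrite /= ?mul1n ?mul0n ?addn0.
Qed.

Lemma switch_step_set_mxrow m (C : colmx m) (l : 'I_m) (b : 'I_m -> bool) :
  (forall n, 0 < n -> \sum_c b c * tcount C c n = \sum_c C l c * tcount C c n) ->
  switch_step C (set_mxrow C l b).
Proof.
move=> eq_sums; set I := [set q | ~~ C l q && b q]; set J := [set q | ~~ b q && C l q].
have eq_IJ n : 0 < n -> \sum_(i in I) tcount C i n = \sum_(j in J) tcount C j n.
  move=> n_gt0; move: (eq_sums n n_gt0).
  rewrite (sum_bool_split (C l)) (sum_bool_split b (C l)).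
  have andC : \sum_c (b c && C l c) * tcount C c n = \sum_c (C l c && b c) * tcount C c n.
    by apply: eq_bigr => c _; rewrite andbC.
  by rewrite andC => /addnI.
exists I, J, l; split=> //.
- split; first by apply/pred0P => q /=; rewrite !inE; case: (C l q); case: (b q).
  by have := eq_IJ 1 isT; rewrite !(eq_bigr _ (fun c _ => tcount1 C c)) !sum1_card.
- by move=> i; rewrite inE => /andP[/negbTE].
- by move=> j; rewrite inE => /andP[].
apply/matrixP => p q; rewrite !mxE; case: eqP => // ->.
by rewrite !inE; case: (C l q); case: (b q).
Qed.

Lemma row_mixS m (A B : colmx m) (l : 'I_m) :
  row_mix A B l.+1 = set_mxrow (row_mix A B l) l (B l).
Proof.
apply/matrixP => p q; rewrite !mxE ltnS leq_eqVlt.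
case: (eqVneq p l) => [-> | ]; first by rewrite eqxx.
by rewrite -val_eqE => /negbTE ->.
Qed.

Theorem theorem19 (m : nat) (A B : colmx m) :
  A != B -> strictly_tree_coloring_equivalent A B ->
  exists (r : nat) (Cs : nat -> colmx m),
    [/\ 1 <= r, Cs 0 = A, Cs r = B &
        forall s, 1 <= s <= r -> switch_step (Cs s.-1) (Cs s)].
Proof.
move=> neqAB eqAB.
(* A != B is only needed for r = m >= 1; rows on which A and B agree give
   switches with I = J = set0. *)
have m_gt0 : 0 < m.
  by case: m A B neqAB {eqAB} => // A B; apply: contra_neqT => _; apply/matrixP => -[].
exists m, (row_mix A B); split=> //.
- by apply/matrixP => p q; rewrite mxE ltn0.
- by apply/matrixP => p q; rewrite mxE ltn_ord.
move=> s /andP[s_gt0 s_le].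
have [l ->] : exists l : 'I_m, s = l.+1.
  have l_lt : s.-1 < m by lia.
  by exists (Ordinal l_lt); rewrite /= prednK.
rewrite row_mixS /=.
apply: switch_step_set_mxrow => n n_gt0.
under eq_bigr => c _ do rewrite tcount_row_mix // (eqAB _ n_gt0).
under [RHS]eq_bigr => c _ do rewrite tcount_row_mix // mxE ltnn.
by rewrite -!child_count_sum (child_count_equiv eqAB).
Qed.
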